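(* Let $0<p<1$, $G\sim D(n,p)$. Fix a tower vector $h=(h_1,\dots,h_s)$ of positive integers summing to $n$, and a tower decomposition $H=(H_1,\dots,H_s)$ (a partition of $\{1,\dots,n\}$ into ordered sets) with $|H_i|=h_i$. (a) $\Pr(h(G)=h) = w(h)/\sum_{h'} w(h')$, where the sum ranges over all tower vectors $h'$ (compositions of $n$) and $$w(h)=\binom{n}{h_1,\dots,h_s}\prod_{k=2}^{s}\frac{\left(1-(1-p)^{h_{k-1}}\right)^{h_k}}{(1-p)^{h_k\sum_{i=1}^{k-1}h_i}}.$$ (b) Conditional on the event that $H$ is the tower decomposition of $G$, the parent sets $\mathrm{Pa}(v)$, $v\in\{1,\dots,n\}$, are mutually independent; vertices $v\in H_1$ have $\mathrm{Pa}(v)=\emptyset$; and for $v\in H_j$ with $j\ge 2$ and $S\subseteq \bigcup_{i=1}^{j-1}H_i$, $$\Pr(\mathrm{Pa}(v)=S)=\begin{cases} C\left(\frac{p}{1-p}\right)^{|S|} & \text{if } S\cap H_{j-1}\ne\emptyset,\\ 0 & \text{otherwise,}\end{cases}$$ where $C$ is the normalizing constant (depending on $j$ and $H$), and $\Pr(\mathrm{Pa}(v)=S)=0$ for other $S$.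
   Context: $D(n,p)$ is the distribution on DAGs with vertex set $\{1,\dots,n\}$ assigning each DAG with $e$ edges probability proportional to $(p/(1-p))^e$. $\mathrm{Pa}(v)$ is the set of vertices $u$ with an edge $u\to v$; a source is a vertex with no parents. The tower decomposition of a DAG $G$ is $(H_1,\dots,H_s)$ where $H_1$ is the set of sources of $G$, $H_2$ the set of sources of $G$ with $H_1$ removed, $H_3$ the set of sources of $G$ with $H_1\cup H_2$ removed, etc., until all vertices are used; the tower vector is $h(G)=(|H_1|,\dots,|H_s|)$. $\binom{n}{h_1,\dots,h_s}$ is the multinomial coefficient. *)

From mathcomp Require Import all_boot all_order all_algebra.
Set Implicit Arguments. Unset Strict Implicit. Unset Printing Implicit Defensive.
Import Order.TTheory GRing.Theory Num.Theory.
Local Open Scope ring_scope.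

(* A directed graph on {0,...,n-1} given by its parent sets: G v = Pa(v);
   edge u -> v iff u \in G v. *)
Definition pgraph (n : nat) := {ffun 'I_n -> {set 'I_n}}.

Definition is_dag n (G : pgraph n) : bool :=
  [forall u : 'I_n, forall v : 'I_n,
     (u \in G v) ==> ~~ connect (fun a b : 'I_n => a \in G b) v u].

(* iterated source removal; R = set of remaining vertices *)
Fixpoint tower_aux n (G : pgraph n) (fuel : nat) (R : {set 'I_n})
  : seq {set 'I_n} :=
  match fuel with
  | 0 => [::]
  | fuel'.+1 =>
      if R == set0 then [::]
      else let S := [set v in R | G v :&: R == set0] in
           S :: tower_aux G fuel' (R :\: S)
  end.

(* tower decomposition (H_1, ..., H_s) of G (n steps suffice for a DAG) *)
Definition tower n (G : pgraph n) : seq {set 'I_n} := tower_aux G n [set: 'I_n].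

Definition tower_vec n (G : pgraph n) : seq nat :=
  map (fun A : {set 'I_n} => #|A|) (tower G).

Definition nedges n (G : pgraph n) : nat := (\sum_(v : 'I_n) #|G v|)%N.

Definition dag_weight (R : realFieldType) (p : R) n (G : pgraph n) : R :=
  (p / (1 - p)) ^+ nedges G.

Definition PrD (R : realFieldType) (n : nat) (p : R) (E : pred (pgraph n)) : R :=
  (\sum_(G : pgraph n | is_dag G && E G) dag_weight p G) /
  (\sum_(G : pgraph n | is_dag G) dag_weight p G).

Definition condPrD (R : realFieldType) (n : nat) (p : R)
  (E F : pred (pgraph n)) : R :=
  PrD p (fun G => E G && F G) / PrD p F.

Definition multinom (R : realFieldType) (n : nat) (h : seq nat) : R :=
  (n`!)%:R / \prod_(x <- h) (x`!)%:R.

Definition tower_w (R : realFieldType) (n : nat) (p : R) (h : seq nat) : R :=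
  multinom R n h *
  \prod_(1 <= k < size h)
     ((1 - (1 - p) ^+ nth 0%N h k.-1) ^+ nth 0%N h k /
      (1 - p) ^+ (nth 0%N h k * (\sum_(i < k) nth 0%N h i))%N).

Definition is_composition (n : nat) (h : seq nat) : bool :=
  all (fun x => 0 < x)%N h && (sumn h == n).

(* sum of w(h') over all compositions h' of n: compositions of n have length
   s <= n and parts <= n, so they are exactly the (map val t) with
   t : s.-tuple 'I_n.+1, s <= n, satisfying is_composition *)
Definition tower_w_total (R : realFieldType) (n : nat) (p : R) : R :=
  \sum_(s < n.+1) \sum_(t : s.-tuple 'I_n.+1 | is_composition n (map val t))
     tower_w n p (map val t).

Definition is_ordered_partition n (H : seq {set 'I_n}) : bool :=
  all (fun A : {set 'I_n} => A != set0) H &&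
  (\bigcup_(A <- H) A == [set: 'I_n]) &&
  [forall i : 'I_(size H), forall j : 'I_(size H),
     (i != j) ==> [disjoint nth set0 H i & nth set0 H j]].

(* A DAG has tower decomposition (H_1, ..., H_s) iff every v in H_j has all its
   parents in H_1 u ... u H_(j-1) and, when j >= 2, at least one parent in H_(j-1).
   This is a conjunction of conditions on the single parent sets Pa(v), and the
   weight (p/(1-p))^e of a DAG is the product of the (p/(1-p))^|Pa(v)|, so the total
   weight of the DAGs with a given tower factorizes over the vertices.  This gives
   part (b) at once.  For v in H_j, j >= 2, the factor is the sum of x^|S| over the
   S contained in U_j = H_1 u ... u H_(j-1) but not in U_(j-1), i.e.
   (1+x)^|U_j| - (1+x)^|U_(j-1)| = (1 - (1-p)^h_(j-1)) / (1-p)^|U_j| for x = p/(1-p);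
   multiplying over the vertices gives the product in w(h), and the multinomial
   coefficient counts the ordered partitions with block sizes h. *)

From mathcomp Require Import all_boot all_order all_algebra.
From mathcomp Require Import ring.
Set Implicit Arguments. Unset Strict Implicit. Unset Printing Implicit Defensive.
Import Order.TTheory GRing.Theory Num.Theory.
Local Open Scope ring_scope.

Lemma card_setD_lt (T : finType) (A X : {set T}) :
  A != set0 -> A \subset X -> (#|X :\: A| < #|X|)%N.
Proof.
move=> nA sAX; rewrite -(cardsID A X) (setIidPr sAX) -[X in (X < _)%N]add0n ltn_add2r.
by rewrite card_gt0.
Qed.

Section OrderedPartitions.

Variable n : nat.
Implicit Types (A X : {set 'I_n}) (H : seq {set 'I_n}) (u v : 'I_n).

Definition block H u : nat := find (fun A => u \in A) H.
Arguments block : simpl never.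

Fixpoint ordpart X H : bool :=
  match H with
  | [::] => X == set0
  | A :: H' => [&& A != set0, A \subset X & ordpart (X :\: A) H']
  end.

Definition shape H : seq nat := map (fun A => #|A|) H.

Lemma block_cons A H u :
  block (A :: H) u = if u \in A then 0%N else (block H u).+1.
Proof. by []. Qed.

Lemma ordpart_mem X H u : ordpart X H -> (u \in X) = (block H u < size H)%N.
Proof.
elim: H X => [|A H IH] X /=; first by move/eqP->; rewrite inE.
case/and3P=> _ sAX oH; rewrite block_cons.
case: ifP => uA /=; first by rewrite (subsetP sAX).
by rewrite ltnS -(IH _ oH) inE uA.
Qed.

Lemma ordpart_nth X H u i :
  ordpart X H -> (i < size H)%N -> (u \in nth set0 H i) = (block H u == i).
Proof.
elim: H X i => [|A H IH] X i //= /and3P[_ _ oH].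
case: i => [|i] ilt; rewrite block_cons; first by case: (u \in A).
rewrite ltnS in ilt; rewrite (IH _ _ oH ilt).
case: ifP => // uA; apply/negbTE/eqP => bi.
by move: (ordpart_mem u oH); rewrite inE uA bi ilt.
Qed.

Lemma ordpart_size X H : ordpart X H -> (size H <= #|X|)%N.
Proof.
elim: H X => [|A H IH] X //= /and3P[nA sAX oH].
exact: leq_ltn_trans (IH _ oH) (card_setD_lt nA sAX).
Qed.

Lemma ordpart_shape X H :
  ordpart X H -> all (fun k => 0 < k)%N (shape H) && (sumn (shape H) == #|X|).
Proof.
rewrite /shape; elim: H X => [|A H IH] X /=; first by move/eqP->; rewrite cards0.
case/and3P=> nA sAX /IH /andP[-> /eqP->]; rewrite card_gt0 nA.
by rewrite cardsD (setIidPr sAX) subnKC ?eqxx ?subset_leq_card.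
Qed.

Lemma ordered_partition_ordpart H : is_ordered_partition H -> ordpart [set: 'I_n] H.
Proof.
case/andP=> /andP[nH /eqP UH] /forallP disjH; move: nH UH.
have {}disjH i j : (i < size H)%N -> (j < size H)%N -> i != j ->
    [disjoint nth set0 H i & nth set0 H j].
  by move=> il jl; move: (disjH (Ordinal il)) => /forallP/(_ (Ordinal jl))/implyP.
elim: H [set: 'I_n] disjH => [|A H IH] X disjH /=; first by rewrite big_nil => _ <-.
case/andP=> nA nH; rewrite big_cons => UX.
have dAU : [disjoint A & \bigcup_(B <- H) B].
  rewrite bigcup_seq; apply: bigcup_disjoint => B BH.
  by have := disjH 0%N (index B H).+1 isT; rewrite /= ltnS index_mem BH nth_index //; apply.
rewrite nA -UX subsetUl /=; apply: IH => //.
  by move=> i j il jl ij; exact: (disjH i.+1 j.+1 il jl ij).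
by rewrite setDUl setDv set0U; apply/esym/setDidPl; rewrite disjoint_sym.
Qed.

End OrderedPartitions.

Section Towers.

Variable n : nat.
Implicit Types (A X S : {set 'I_n}) (H : seq {set 'I_n}) (u v : 'I_n) (G : pgraph n).

Definition compatible H v S : bool :=
  [forall u in S, (block H u < block H v)%N] &&
  ((block H v == 0)%N || [exists u in S, block H u == (block H v).-1]).

Lemma compatible_block0 H v S : block H v = 0%N -> compatible H v S = (S == set0).
Proof.
move=> bv; rewrite /compatible bv eqxx andbT.
apply/forall_inP/eqP => [lt0|-> u]; last by rewrite inE.
by apply/setP => u; rewrite inE; apply/negbTE/negP => /lt0.
Qed.

Lemma compatible_head A H v S : v \in A -> compatible (A :: H) v S = (S == set0).
Proof. by move=> vA; apply: compatible_block0; rewrite block_cons vA. Qed.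

Lemma compatible_behead A H v S : v \notin A ->
  compatible (A :: H) v S = (S != set0) && compatible H v (S :\: A).
Proof.
move=> vA; rewrite /compatible !block_cons (negbTE vA) /=.
have -> : [forall u in S, ((if u \in A then 0 else (block H u).+1) < (block H v).+1)%N]
        = [forall u in S :\: A, (block H u < block H v)%N].
  apply/forall_inP/forall_inP => lt_v u.
    by case/setDP=> uS uA; have := lt_v u uS; rewrite (negbTE uA).
  by move=> uS; case: ifP => // uA; apply: lt_v; rewrite inE uA.
case: forall_inP => /= [lt_v|_]; last by rewrite andbF.
case: (block H v) lt_v => [|b] lt_v /=.
  rewrite andbT; apply/exists_inP/set0Pn => [[u uS _]|[u uS]]; first by exists u.
  by exists u => //; case: ifP => // uA; have := lt_v u; rewrite inE uA uS => /(_ isT).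
apply/exists_inP/andP => [[u uS]|[/set0Pn _ /exists_inP[u /setDP[uS uA] /eqP bu]]].
  case: ifP => // uA /eqP[bu]; split; first by apply/set0Pn; exists u.
  by apply/exists_inP; exists u; rewrite ?inE ?uA ?bu.
by exists u; rewrite // (negbTE uA) bu.
Qed.

Lemma tower_auxP G H X fuel : ordpart X H -> (size H <= fuel)%N ->
  (tower_aux G fuel X == H) = [forall v in X, compatible H v (G v :&: X)].
Proof.
elim: H X fuel => [|A H IH] X [|fuel] //=.
- by move=> /eqP-> _; symmetry; apply/forall_inP => v; rewrite inE.
- by move=> /eqP-> _; rewrite eqxx; symmetry; apply/forall_inP => v; rewrite inE.
case/and3P=> nA sAX oH; rewrite ltnS => sH.
have nX : X != set0 by apply: contraNneq nA => X0; rewrite -subset0 -X0.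
rewrite (negbTE nX) eqseq_cons.
set S := [set v in X | G v :&: X == set0].
have restrict v : v \notin A ->
    compatible (A :: H) v (G v :&: X) = (G v :&: X != set0) && compatible H v (G v :&: (X :\: A)).
  by move=> vA; rewrite compatible_behead // setIDA.
apply/andP/forall_inP => [[/eqP SA]|comp].
  rewrite SA (IH _ _ oH sH) => /forall_inP compH v vX.
  have /setP/(_ v) := SA; rewrite inE vX /=.
  case: (boolP (v \in A)) => vA vS; first by rewrite compatible_head // vS.
  by rewrite restrict // vS compH // inE vA.
have SA : S = A.
  apply/setP => v; rewrite inE; case: (boolP (v \in X)) => vX /=; last first.
    by apply/esym/negbTE; apply: contra vX; apply: (subsetP sAX).
  have := comp v vX; case: (boolP (v \in A)) => vA; first by rewrite compatible_head.
  by rewrite restrict // => /andP[/negbTE].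
split; first by rewrite SA.
rewrite SA (IH _ _ oH sH); apply/forall_inP => v /setDP[vX vA].
by have := comp v vX; rewrite restrict // => /andP[].
Qed.

Lemma towerP G H :
  ordpart [set: 'I_n] H -> (tower G == H) = [forall v, compatible H v (G v)].
Proof.
move=> oH; rewrite /tower tower_auxP //; last first.
  by have := ordpart_size oH; rewrite cardsT card_ord.
by apply: eq_forallb => v; rewrite inE setIT.
Qed.

Lemma compatible_dag G H : [forall v, compatible H v (G v)] -> is_dag G.
Proof.
move=> /forallP comp.
have edge a b : a \in G b -> (block H a < block H b)%N.
  by have /andP[/forall_inP lt_b _] := comp b; apply: lt_b.
apply/forallP => u; apply/forallP => v; apply/implyP => uGv.
apply/negP => /connectP[s path_s last_s].
suff : (block H v <= block H u)%N by rewrite leqNgt edge.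
rewrite last_s; elim: s v path_s {last_s uGv} => [|x s IHs] v //= /andP[vx xs].
exact: leq_trans (ltnW (edge _ _ vx)) (IHs _ xs).
Qed.

Lemma dag_source G X : is_dag G -> X != set0 -> exists2 v, v \in X & G v :&: X == set0.
Proof.
move=> dG /set0Pn[v0 v0X].
pose ancestors v := #|[set w | connect (fun a b => a \in G b) w v]|.
suff: forall k v, (ancestors v < k)%N -> v \in X -> exists2 v, v \in X & G v :&: X == set0.
  by apply; first exact: ltnSn (ancestors v0).
elim=> // k IH v lt_k vX.
have [|/set0Pn[u /setIP[uGv uX]]] := boolP (G v :&: X == set0); first by exists v.
apply: (IH u) uX; rewrite ltnS in lt_k; apply: leq_trans lt_k.
apply: proper_card; apply/properP; split.
  apply/subsetP => w; rewrite !inE => wu.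
  exact: connect_trans wu (connect1 _).
exists v; first by rewrite inE connect0.
by rewrite inE; move: dG => /forallP/(_ u)/forallP/(_ v)/implyP/(_ uGv).
Qed.

Lemma ordpart_tower_aux G fuel X :
  is_dag G -> (#|X| <= fuel)%N -> ordpart X (tower_aux G fuel X).
Proof.
move=> dG; elim: fuel X => [|f IH] X /=; first by rewrite leqn0 cards_eq0.
move=> leX; case: ifP => nX /=; first by rewrite nX.
set S := [set v in X | G v :&: X == set0].
have sSX : S \subset X by apply/subsetP => v; rewrite inE => /andP[].
have nS : S != set0.
  by have [v vX vS] := dag_source dG (negbT nX); apply/set0Pn; exists v; rewrite inE vX.
rewrite nS sSX /=; apply: IH; rewrite -ltnS; apply: leq_trans leX.
exact: card_setD_lt nS sSX.
Qed.

Lemma ordpart_tower G : is_dag G -> ordpart [set: 'I_n] (tower G).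
Proof. by move=> dG; apply: ordpart_tower_aux; rewrite ?cardsT ?card_ord. Qed.

End Towers.

Section Layers.

Variables (n : nat) (H : seq {set 'I_n}).
Implicit Types (S : {set 'I_n}) (u v : 'I_n).

Definition blocks_before k : {set 'I_n} := [set u | (block H u < k)%N].

Lemma subset_blocks_before k S :
  (S \subset blocks_before k) = [forall u in S, (block H u < k)%N].
Proof.
apply/subsetP/forall_inP => sub u uS; first by have := sub u uS; rewrite inE.
by rewrite inE sub.
Qed.

Lemma compatible_blocks_before v S b : block H v = b.+1 ->
  compatible H v S = (S \subset blocks_before b.+1) && ~~ (S \subset blocks_before b).
Proof.
move=> bv; rewrite /compatible bv /= !subset_blocks_before.
case: forall_inP => //= lt_v; rewrite negb_forall_in; apply/exists_inP/exists_inP.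
  by case=> u uS /eqP bu; exists u; rewrite // bu ltnn.
case=> u uS not_lt; exists u => //.
by have := lt_v u uS; rewrite ltnS leq_eqVlt (negbTE not_lt) orbF.
Qed.

Hypothesis oH : ordpart [set: 'I_n] H.

Lemma block_lt u : (block H u < size H)%N.
Proof. by rewrite -(ordpart_mem u oH) inE. Qed.

Lemma mem_nth_block u i : (i < size H)%N -> (u \in nth set0 H i) = (block H u == i).
Proof. exact: ordpart_nth oH. Qed.

Lemma blocks_before_bigcup k :
  (k <= size H)%N -> blocks_before k = \bigcup_(i < k) nth set0 H i.
Proof.
move=> le_k; apply/setP => u; rewrite inE; apply/idP/bigcupP => [lt_u|[i _]].
  by exists (Ordinal lt_u); rewrite // mem_nth_block //; apply: leq_trans lt_u le_k.
by rewrite mem_nth_block => [/eqP->|]; last exact: leq_trans (ltn_ord i) le_k.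
Qed.

Lemma blocks_beforeS k : (k < size H)%N ->
  blocks_before k.+1 = blocks_before k :|: nth set0 H k.
Proof.
move=> lt_k; apply/setP => u; rewrite !inE mem_nth_block // ltnS.
by rewrite leq_eqVlt orbC.
Qed.

Lemma card_blocks_before k :
  (k <= size H)%N -> #|blocks_before k| = (\sum_(i < k) #|nth set0 H i|)%N.
Proof.
elim: k => [_|k IH lt_k].
  by rewrite big_ord0; apply/eqP; rewrite cards_eq0; apply/eqP/setP => u; rewrite !inE.
rewrite big_ord_recr /= -IH ?(ltnW lt_k) // blocks_beforeS // cardsU.
suff -> : blocks_before k :&: nth set0 H k = set0 by rewrite cards0 subn0.
by apply/setP => u; rewrite !inE mem_nth_block // ltn_neqAle andbC; case: eqP.
Qed.

Lemma compatible_layer v S j : (1 <= j < size H)%N -> block H v = j ->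
  compatible H v S =
  (S \subset \bigcup_(i < j) nth set0 H i) && (S :&: nth set0 H j.-1 != set0).
Proof.
case: j => // j /andP[_ lt_j] bv; have lt_j' := ltnW lt_j.
rewrite (compatible_blocks_before _ bv) -blocks_before_bigcup //=.
case: (boolP (S \subset _)) => //= /subsetP sub; congr negb.
apply/subsetP/eqP => [le_S|dis].
  apply/setP => u; rewrite !inE mem_nth_block //; apply/negbTE/andP => -[uS /eqP bu].
  by have := le_S u uS; rewrite inE bu ltnn.
move=> u uS; have := sub u uS; rewrite !inE ltnS leq_eqVlt => /orP[/eqP bu|//].
by move/setP: dis => /(_ u); rewrite !inE uS mem_nth_block // bu eqxx.
Qed.

Lemma prod_block (R : comPzSemiRingType) (F : nat -> R) :
  \prod_v F (block H v) = \prod_(k < size H) F k ^+ #|nth set0 H k|.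
Proof.
rewrite (partition_big (fun v => Ordinal (block_lt v)) xpredT) //.
apply: eq_bigr => k _; rewrite -prodr_const; apply: eq_big => v.
  by rewrite -(inj_eq val_inj) /= mem_nth_block.
by move/eqP <-.
Qed.

Lemma compatible_exists v : exists S, compatible H v S.
Proof.
case bv: (block H v) => [|b]; first by exists set0; rewrite compatible_block0.
have lt_b : (b < size H)%N by have := block_lt v; rewrite bv; apply: ltnW.
have /andP[/allP pos _] := ordpart_shape oH.
have /card_gt0P[u uH] : (0 < #|nth set0 H b|)%N by apply: pos; apply: map_f; exact: mem_nth.
exists (nth set0 H b); rewrite (compatible_blocks_before _ bv) blocks_beforeS // subsetUr /=.
apply/negP => /subsetP/(_ u uH); rewrite inE.
by move: uH; rewrite mem_nth_block // => /eqP->; rewrite ltnn.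
Qed.

End Layers.

Lemma sum_ffun_prod (R : comPzSemiRingType) (I T : finType)
    (B : I -> pred T) (F : I -> T -> R) :
  \sum_(f : {ffun I -> T} | [forall i, B i (f i)]) \prod_i F i (f i) =
  \prod_i \sum_(x | B i x) F i x.
Proof.
under [RHS]eq_bigr do rewrite big_mkcond.
rewrite bigA_distr_bigA big_mkcond /=; apply: eq_bigr => f _.
case: forallP => [Bf | /forallP/forallPn[i nBi]]; first by apply: eq_bigr => i _; rewrite Bf.
by rewrite (bigD1 i) //= (negbTE nBi) mul0r.
Qed.

Lemma sum_pow_card_subset (R : comPzSemiRingType) (T : finType) (x : R) (X : {set T}) :
  \sum_(S : {set T} | S \subset X) x ^+ #|S| = (1 + x) ^+ #|X|.
Proof.
rewrite addrC exprD1n.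
rewrite (partition_big (fun S : {set T} => inord #|S| : 'I_#|X|.+1) xpredT) //.
apply: eq_bigr => k _; rewrite (eq_bigr (fun _ => x ^+ k)); last first.
  by move=> S /andP[sSX /eqP <-]; rewrite inordK // ltnS subset_leq_card.
rewrite sumr_const -cards_draws; congr (_ *+ _); apply: eq_card => S.
rewrite [in LHS]unfold_in /= !inE; case: (boolP (S \subset X)) => //= sSX.
by rewrite -(inj_eq val_inj) /= inordK // ltnS subset_leq_card.
Qed.

Lemma big_tuple_cons (R : Type) (idx : R) (op : Monoid.com_law idx) (T : finType) m
    (P : pred (m.+1.-tuple T)) (F : m.+1.-tuple T -> R) :
  \big[op/idx]_(t | P t) F t =
  \big[op/idx]_x \big[op/idx]_(t : m.-tuple T | P [tuple of x :: t]) F [tuple of x :: t].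
Proof.
rewrite [RHS]pair_big_dep (reindex (fun xt : T * m.-tuple T => [tuple of xt.1 :: xt.2])) //.
exists (fun t => (thead t, [tuple of behead t])) => [[x t] _ | t _] /=.
  by congr (_, _); apply: val_inj.
by rewrite -tuple_eta.
Qed.

Lemma sum_ordpart_shape n (X : {set 'I_n}) (h : seq nat) :
  all (fun k => 0 < k)%N h -> sumn h = #|X| ->
  ((\sum_(T : (size h).-tuple {set 'I_n} | ordpart X T && (shape T == h)) 1)
     * \prod_(k <- h) k`!)%N = #|X|`!.
Proof.
elim: h X => [|k h IH] X /=.
  move=> _ X0; rewrite big_nil muln1 -X0 (big_pred1 [tuple]) // => T.
  by rewrite tuple0 /= !eqxx andbT; apply/eqP/cards0_eq; rewrite -X0.
case/andP=> k_gt0 pos sX; have le_kX : (k <= #|X|)%N by rewrite -sX leq_addr.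
rewrite big_tuple_cons big_distrl big_cons /=.
rewrite (eq_bigr (fun A : {set 'I_n} =>
  if (A \subset X) && (#|A| == k) then (k`! * (#|X| - k)`!)%N else 0%N)); last first.
  move=> A _; case: ifP => [/andP[sAX /eqP cardA] | nA]; last first.
    rewrite big_pred0 // => T; rewrite eqseq_cons; apply/negbTE; apply: contraFN nA.
    by case/andP=> /and3P[_ -> _] /andP[-> _].
  have cardXA : #|X :\: A| = (#|X| - k)%N by rewrite cardsD (setIidPr sAX) cardA.
  rewrite mulnCA -cardXA -(IH (X :\: A)) //; last by rewrite cardXA -sX addKn.
  congr (_ * (_ * _))%N; apply: eq_bigl => T.
  by rewrite eqseq_cons sAX cardA eqxx -card_gt0 cardA k_gt0.
rewrite -big_mkcond sum_nat_const.
rewrite (eq_card (B := [set A : {set 'I_n} | A \subset X & #|A| == k])); last first.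
  by move=> A; rewrite inE.
by rewrite cards_draws bin_fact.
Qed.

Lemma map_val_tuple_inord m s (l : seq nat) :
  size l = s -> all (fun x => x <= m)%N l ->
  map val [tuple (inord (nth 0%N l i) : 'I_m.+1) | i < s] = l.
Proof.
move=> size_l le_l; apply: (@eq_from_nth _ 0%N); first by rewrite size_map size_tuple.
move=> i; rewrite size_map size_tuple => lt_i.
rewrite (nth_map ord0) ?size_tuple // -(tnth_nth ord0 _ (Ordinal lt_i)) tnth_mktuple /=.
by rewrite inordK // ltnS; apply: (allP le_l); apply: mem_nth; rewrite size_l.
Qed.

Lemma composition_bounds n h :
  is_composition n h -> (size h <= n)%N /\ all (fun x => x <= n)%N h.
Proof.
case/andP=> pos /eqP <-; elim: h pos => [|k h IH] //= /andP[k_gt0 /IH[size_h all_h]].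
split; first by rewrite -add1n leq_add.
by rewrite leq_addr; apply: sub_all all_h => x le_x; apply: leq_trans le_x (leq_addl _ _).
Qed.

Lemma tower_vec_composition n (G : pgraph n) : is_dag G -> is_composition n (tower_vec G).
Proof. by move=> dG; have := ordpart_shape (ordpart_tower dG); rewrite cardsT card_ord. Qed.

Section ParentWeights.

Variables (R : realFieldType) (p : R) (n : nat).
Hypothesis p01 : 0 < p < 1.
Implicit Types (S : {set 'I_n}) (H : seq {set 'I_n}) (v : 'I_n) (G : pgraph n).

Definition odds : R := p / (1 - p).

Definition parent_weight H v (B : pred {set 'I_n}) : R :=
  \sum_(S | compatible H v S && B S) odds ^+ #|S|.

Lemma odds_gt0 : 0 < odds.
Proof. by case/andP: p01 => p0 p1; rewrite divr_gt0 // subr_gt0. Qed.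

Lemma dag_weightE G : dag_weight p G = \prod_v odds ^+ #|G v|.
Proof. by rewrite /dag_weight /nedges (big_morph _ (exprD _) (expr0 _)). Qed.

Lemma sum_dag_weight_tower_parents H (B : 'I_n -> pred {set 'I_n}) :
  ordpart [set: 'I_n] H ->
  \sum_(G | is_dag G && ([forall v, B v (G v)] && (tower G == H))) dag_weight p G =
  \prod_v parent_weight H v (B v).
Proof.
move=> oH; rewrite -sum_ffun_prod.
rewrite (eq_bigl (fun G : pgraph n => [forall v, compatible H v (G v) && B v (G v)])).
  by apply: eq_bigr => G _; apply: dag_weightE.
move=> G; rewrite towerP //.
have -> : [forall v, compatible H v (G v) && B v (G v)] =
          [forall v, compatible H v (G v)] && [forall v, B v (G v)].
  apply/forallP/andP => [all_v | [/forallP comp /forallP BG] v]; last by rewrite comp BG.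
  by split; apply/forallP => v; case/andP: (all_v v).
case: (boolP [forall v, compatible H v (G v)]) => [comp | _]; last by rewrite !andbF.
by rewrite (compatible_dag comp) andbT.
Qed.

Lemma sum_dag_weight_tower H : ordpart [set: 'I_n] H ->
  \sum_(G | is_dag G && (tower G == H)) dag_weight p G = \prod_v parent_weight H v predT.
Proof.
move=> oH; rewrite -sum_dag_weight_tower_parents //; apply: eq_bigl => G.
by rewrite (_ : [forall v, _] = true) //; apply/forallP.
Qed.

Lemma sum_dag_weight_gt0 : 0 < \sum_(G : pgraph n | is_dag G) dag_weight p G.
Proof.
pose G0 : pgraph n := [ffun _ => set0].
have dag0 : is_dag G0 by apply/forallP => u; apply/forallP => v; rewrite ffunE inE.
rewrite (bigD1 _ dag0) //= ltr_wpDr ?exprn_gt0 ?odds_gt0 //.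
by apply: sumr_ge0 => G _; rewrite exprn_ge0 // ltW // odds_gt0.
Qed.

Lemma parent_weight_gt0 H v : ordpart [set: 'I_n] H -> 0 < parent_weight H v predT.
Proof.
move=> oH; have [S compS] := compatible_exists oH v.
rewrite /parent_weight (bigD1 S) ?compS //= ltr_wpDr ?exprn_gt0 ?odds_gt0 //.
by apply: sumr_ge0 => S' _; rewrite exprn_ge0 // ltW // odds_gt0.
Qed.

Lemma parent_weight1 H v S :
  parent_weight H v (pred1 S) = if compatible H v S then odds ^+ #|S| else 0.
Proof.
rewrite /parent_weight; case: ifP => compS.
  by rewrite (big_pred1 S) // => S' /=; case: eqP => [->|]; rewrite ?compS ?andbF.
by rewrite big_pred0 // => S' /=; case: eqP => [->|]; rewrite ?compS ?andbF.
Qed.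

Lemma condPrD_tower H (E : pred (pgraph n)) (B : 'I_n -> pred {set 'I_n}) :
  ordpart [set: 'I_n] H -> E =1 (fun G => [forall v, B v (G v)]) ->
  condPrD p E (fun G => tower G == H) =
  \prod_v (parent_weight H v (B v) / parent_weight H v predT).
Proof.
move=> oH EB.
have num : \sum_(G | is_dag G && (E G && (tower G == H))) dag_weight p G =
           \prod_v parent_weight H v (B v).
  by rewrite -sum_dag_weight_tower_parents //; apply: eq_bigl => G; rewrite EB.
rewrite /condPrD /PrD num sum_dag_weight_tower // prodf_div.
have := sum_dag_weight_gt0; set D := \sum_(G | is_dag G) _ => /lt0r_neq0 D0.
by rewrite invfM invrK mulrACA mulVf // mulr1.
Qed.

Section TowerConditioned.

Variable H : seq {set 'I_n}.
Hypothesis oH : ordpart [set: 'I_n] H.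

Let parent_weight_neq0 v : parent_weight H v predT != 0.
Proof. by rewrite lt0r_neq0 // parent_weight_gt0. Qed.

Lemma condPrD_parent v S :
  condPrD p (fun G => G v == S) (fun G => tower G == H) =
  parent_weight H v (pred1 S) / parent_weight H v predT.
Proof.
rewrite (@condPrD_tower H _ (fun u => if u == v then pred1 S else predT)) //; last first.
  move=> G; apply/eqP/forallP => [GvS u | /(_ v)]; last by rewrite eqxx => /eqP.
  by case: eqP => // ->; apply/eqP.
by rewrite (bigD1 v) //= eqxx big1 ?mulr1 // => u /negbTE->; rewrite divff.
Qed.

Lemma condPrD_parents_indep (J : {set 'I_n}) (S : {ffun 'I_n -> {set 'I_n}}) :
  condPrD p (fun G => [forall v in J, G v == S v]) (fun G => tower G == H) =
  \prod_(v in J) condPrD p (fun G => G v == S v) (fun G => tower G == H).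
Proof.
rewrite (@condPrD_tower H _ (fun u => if u \in J then pred1 (S u) else predT)) //; last first.
  by move=> G; apply: eq_forallb => v; case: (v \in J).
rewrite [RHS]big_mkcond; apply: eq_bigr => v _.
by case: ifP => _; rewrite ?condPrD_parent ?divff.
Qed.

Lemma condPrD_source_parents v :
  v \in nth set0 H 0 -> condPrD p (fun G => G v == set0) (fun G => tower G == H) = 1.
Proof.
move=> vH0; have lt0 : (0 < size H)%N by move: vH0; case: (H) => //; rewrite inE.
rewrite mem_nth_block // in vH0.
rewrite condPrD_parent -[RHS](divff (parent_weight_neq0 v)); congr (_ / _).
by apply: eq_bigl => S; rewrite /= (compatible_block0 _ (eqP vH0)) andbT andbb.
Qed.

Lemma condPrD_parents_layer j : (1 <= j < size H)%N ->
  exists C : R, forall v, v \in nth set0 H j -> forall S,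
    condPrD p (fun G => G v == S) (fun G => tower G == H) =
    (if (S \subset \bigcup_(i < j) nth set0 H i) && (S :&: nth set0 H j.-1 != set0)
     then C * odds ^+ #|S| else 0).
Proof.
move=> j_range.
pose layer_ok S := (S \subset \bigcup_(i < j) nth set0 H i) && (S :&: nth set0 H j.-1 != set0).
exists (\sum_(S | layer_ok S) odds ^+ #|S|)^-1 => v vj S.
have bv : block H v = j by apply/eqP; rewrite -mem_nth_block //; case/andP: j_range.
have compE S' := compatible_layer oH S' j_range bv.
rewrite condPrD_parent parent_weight1 compE.
rewrite (_ : parent_weight H v predT = \sum_(S | layer_ok S) odds ^+ #|S|); last first.
  by apply: eq_bigl => S'; rewrite compE andbT.
by case: ifP => _; rewrite ?mul0r // mulrC.
Qed.

End TowerConditioned.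

Definition tower_prod (h : seq nat) : R :=
  \prod_(1 <= k < size h)
     ((1 - (1 - p) ^+ nth 0%N h k.-1) ^+ nth 0%N h k /
      (1 - p) ^+ (nth 0%N h k * (\sum_(i < k) nth 0%N h i))%N).

Lemma parent_weight_predT H v :
  parent_weight H v predT =
  if block H v is b.+1
  then (1 + odds) ^+ #|blocks_before H b.+1| - (1 + odds) ^+ #|blocks_before H b|
  else 1.
Proof.
rewrite /parent_weight; case bv: (block H v) => [|b].
  rewrite (eq_bigl (pred1 set0)) ?big_pred1_eq ?cards0 // => S.
  by rewrite compatible_block0 // andbT.
rewrite (eq_bigl (fun S => (S \subset blocks_before H b.+1) && ~~ (S \subset blocks_before H b)));
  last by move=> S; rewrite (compatible_blocks_before _ bv) andbT.
rewrite -!sum_pow_card_subset [X in _ = X - _](bigID (fun S => S \subset blocks_before H b)) /=.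
have before_le : blocks_before H b \subset blocks_before H b.+1.
  by apply/subsetP => u; rewrite !inE; apply: ltnW.
have -> : \sum_(S : {set 'I_n} | (S \subset blocks_before H b.+1) &&
                                  (S \subset blocks_before H b)) odds ^+ #|S| =
          \sum_(S : {set 'I_n} | S \subset blocks_before H b) odds ^+ #|S|.
  apply: eq_bigl => S; case: (boolP (S \subset blocks_before H b)) => sub;
    rewrite ?andbT ?andbF //; exact: subset_trans sub before_le.
by rewrite addrC addrK.
Qed.

Lemma odds_pow_diff m b :
  (1 + odds) ^+ (m + b) - (1 + odds) ^+ m = (1 - (1 - p) ^+ b) / (1 - p) ^+ (m + b).
Proof.
case/andP: p01 => _ p1; have q_neq0 : 1 - p != 0 by rewrite subr_eq0 gt_eqF.
have -> : 1 + odds = (1 - p)^-1 by rewrite /odds; field.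
rewrite !exprVn exprD; field.
by rewrite !expf_neq0.
Qed.

Lemma sum_dag_weight_tower_shape H : ordpart [set: 'I_n] H ->
  \sum_(G | is_dag G && (tower G == H)) dag_weight p G = tower_prod (shape H).
Proof.
move=> oH; rewrite sum_dag_weight_tower //.
pose F k := if k is b.+1
  then (1 + odds) ^+ #|blocks_before H b.+1| - (1 + odds) ^+ #|blocks_before H b| else 1.
rewrite (eq_bigr (fun v => F (block H v))) => [|v _]; last exact: parent_weight_predT.
rewrite prod_block // /tower_prod size_map.
rewrite -(big_mkord xpredT (fun k => F k ^+ #|nth set0 H k|)).
case: (posnP (size H)) => [-> | H_gt0]; first by rewrite !big_geq.
rewrite big_ltn // expr1n mul1r; apply: eq_big_nat => -[//|k] /andP[_ lt_k].
have nthE i : (i < size H)%N -> nth 0%N (shape H) i = #|nth set0 H i|.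
  by move=> lt_i; rewrite (nth_map set0).
have sumE j : (j <= size H)%N -> (\sum_(i < j) nth 0%N (shape H) i)%N = #|blocks_before H j|.
  move=> le_j; rewrite card_blocks_before //; apply: eq_bigr => i _.
  by rewrite nthE // (leq_trans (ltn_ord i)).
have lt_k' : (k < size H)%N := ltnW lt_k.
have card_beforeS : #|blocks_before H k.+1| = (#|blocks_before H k| + #|nth set0 H k|)%N.
  by rewrite !card_blocks_before ?big_ord_recr // ltnW.
rewrite /= !nthE // sumE // card_beforeS.
by rewrite odds_pow_diff expr_div_n -exprM mulnC.
Qed.

Lemma sum_dag_weight_tower_vec h : is_composition n h ->
  \sum_(G : pgraph n | is_dag G && (tower_vec G == h)) dag_weight p G = tower_w n p h.
Proof.
case/andP=> pos /eqP sum_h.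
pose tuple_of_tower G : (size h).-tuple {set 'I_n} :=
  insubd (nseq_tuple (size h) set0) (tower G).
have tuple_towerE G : size (tower G) = size h -> val (tuple_of_tower G) = tower G.
  by move=> e; rewrite val_insubd e eqxx.
rewrite (partition_big tuple_of_tower (fun T => ordpart [set: 'I_n] T && (shape T == h)));
  last first.
  move=> G /andP[dG /eqP th]; rewrite tuple_towerE -?th ?size_map //.
  by rewrite ordpart_tower //=; apply/eqP.
rewrite (eq_bigr (fun _ => tower_prod h)); last first.
  move=> T /andP[oT /eqP shT].
  rewrite -[RHS](congr1 tower_prod shT) -sum_dag_weight_tower_shape //.
  apply: eq_bigl => G; case: (boolP (is_dag G)) => //= _.
  apply/andP/eqP => [[/eqP th /eqP <-] | tT].
    by rewrite tuple_towerE // -th size_map.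
  split; first by rewrite /tower_vec tT; apply/eqP; exact: shT.
  by apply/eqP/val_inj; rewrite tuple_towerE // tT size_tuple.
have card_setT : #|[set: 'I_n]| = n by rewrite cardsT card_ord.
have count := sum_ordpart_shape pos (etrans sum_h (esym card_setT)).
rewrite card_setT in count.
rewrite /tower_w -/(tower_prod h) (_ : multinom R n h = (\sum_(T : (size h).-tuple {set 'I_n}
           | ordpart [set: 'I_n] T && (shape T == h)) 1)%:R).
  by rewrite natr_sum mulr_suml; apply: eq_bigr => T _; rewrite mul1r.
rewrite /multinom -count natrM natr_prod mulfK //.
by rewrite prodf_seq_neq0; apply/allP => k _; rewrite pnatr_eq0 -lt0n fact_gt0.
Qed.

Lemma sum_dag_weight_total :
  \sum_(G : pgraph n | is_dag G) dag_weight p G = tower_w_total n p.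
Proof.
rewrite /tower_w_total.
rewrite (partition_big (fun G : pgraph n => inord (size (tower_vec G)) : 'I_n.+1) xpredT) //.
apply: eq_bigr => s _; under [RHS]eq_bigr => t ct do rewrite -(sum_dag_weight_tower_vec ct).
pose vec_tuple (G : pgraph n) : s.-tuple 'I_n.+1 :=
  [tuple inord (nth 0%N (tower_vec G) i) | i < s].
have vec_tupleE G : is_dag G -> size (tower_vec G) = s -> map val (vec_tuple G) = tower_vec G.
  move=> dG size_G; have [_ le_n] := composition_bounds (tower_vec_composition dG).
  exact: map_val_tuple_inord.
rewrite (partition_big vec_tuple (fun t => is_composition n (map val t))); last first.
  move=> G /andP[dG /eqP sG]; rewrite vec_tupleE ?tower_vec_composition //.
  have [size_le _] := composition_bounds (tower_vec_composition dG).
  by move: sG => /(congr1 val); rewrite /= inordK.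
apply: eq_bigr => t _; apply: eq_bigl => G; case: (boolP (is_dag G)) => //= dG.
have [size_le _] := composition_bounds (tower_vec_composition dG).
rewrite -(inj_eq val_inj) /= inordK //; case: eqP => [size_G | size_G].
  by rewrite -(inj_eq val_inj) /= -(inj_eq (inj_map val_inj)) vec_tupleE.
by apply/esym/negbTE/eqP => vec_t; apply: size_G; rewrite vec_t size_map size_tuple.
Qed.

End ParentWeights.

Unset Implicit Arguments.

Theorem lemma3 (R : realFieldType) (n : nat) (p : R) :
  0 < p < 1 ->
  (forall h : seq nat, is_composition n h ->
     PrD p (fun G : pgraph n => tower_vec G == h) =
     tower_w n p h / tower_w_total n p) /\
  (forall H : seq {set 'I_n}, is_ordered_partition H ->
     (forall (J : {set 'I_n}) (S : {ffun 'I_n -> {set 'I_n}}),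
        condPrD p (fun G : pgraph n => [forall v in J, G v == S v])
                  (fun G : pgraph n => tower G == H) =
        \prod_(v in J) condPrD p (fun G : pgraph n => G v == S v)
                                 (fun G : pgraph n => tower G == H)) /\
     (forall v : 'I_n, v \in nth set0 H 0 ->
        condPrD p (fun G : pgraph n => G v == set0)
                  (fun G : pgraph n => tower G == H) = 1) /\
     (forall j : nat, (1 <= j < size H)%N ->
        exists C : R, forall v : 'I_n, v \in nth set0 H j ->
          forall S : {set 'I_n},
            condPrD p (fun G : pgraph n => G v == S)
                      (fun G : pgraph n => tower G == H) =
            (if (S \subset \bigcup_(i < j) nth set0 H i) &&
                (S :&: nth set0 H j.-1 != set0)
             then C * (p / (1 - p)) ^+ #|S| else 0))).
Proof.
move=> p01; split=> [h comp_h | H /ordered_partition_ordpart oH].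
  by rewrite /PrD sum_dag_weight_tower_vec // sum_dag_weight_total.
split; [|split].
- exact: condPrD_parents_indep.
- exact: condPrD_source_parents.
- exact: condPrD_parents_layer.
Qed.
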